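(* Let $G$ be a connected graph with at least three vertices and let $m \geq 1$ be an integer. Then $$\omega(G)+1 \leq \chi_\rho(FSSD_m(G)) \leq \chi_\rho(G)+1,$$ where $\omega(G)$ denotes the clique number of $G$.
   Context: All graphs are finite and simple. For a positive integer $i$, an $i$-packing in a graph $G$ is a set of vertices any two distinct members of which are at distance greater than $i$ in $G$. The packing chromatic number $\chi_\rho(G)$ is the smallest integer $k$ such that $V(G)$ can be partitioned into sets $V_1,\dots,V_k$ with each $V_i$ an $i$-packing; equivalently, the least $k$ admitting a map $c:V(G)\to\{1,\dots,k\}$ such that $c(u)=c(v)=i$ with $u\neq v$ implies $d_G(u,v)>i$. For a positive integer $m$, the finite super subdivision graph $FSSD_m(G)$ is obtained from $G$ by replacing each edge $uv$ of $G$ by a copy of $K_{2,m}$, i.e. the edge $uv$ is deleted and $m$ new vertices are added, each adjacent to exactly $u$ and $v$. *)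

From Stdlib Require Import ClassicalEpsilon.
From mathcomp Require Import all_boot.
Set Implicit Arguments. Unset Strict Implicit. Unset Printing Implicit Defensive.

Definition simple_graph (V : finType) (e : rel V) : Prop :=
  symmetric e /\ irreflexive e.

Definition connected_graph (V : finType) (e : rel V) : Prop :=
  forall u v : V, connect e u v.

(** [within e i u v] : d_G(u,v) <= i, i.e. there is a walk of length <= i
    from u to v.  Hence d_G(u,v) > i  iff  ~ within e i u v
    (this includes d = infinity for disconnected u, v). *)
Definition within (V : finType) (e : rel V) (i : nat) (u v : V) : Prop :=
  exists p : seq V, [/\ path e u p, last u p = v & size p <= i].

Definition packing_coloring (V : finType) (e : rel V) (k : nat) (c : V -> nat)
  : Prop :=
  (forall v, 1 <= c v <= k) /\
  (forall u v, u != v -> c u = c v -> ~ within e (c u) u v).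

Definition packing_colorable (V : finType) (e : rel V) (k : nat) : Prop :=
  exists c : V -> nat, packing_coloring e k c.

Lemma packing_colorable_card (V : finType) (e : rel V) :
  packing_colorable e #|V|.
Proof.
exists (fun x => (enum_rank x).+1); split.
  by move=> v; rewrite /= ltn_ord.
move=> u v Huv [] /val_inj /enum_rank_inj Huv'.
by rewrite Huv' eqxx in Huv.
Qed.

Definition packing_colorableb (V : finType) (e : rel V) : pred nat :=
  fun k => if excluded_middle_informative (packing_colorable e k)
           then true else false.

Lemma packing_colorableb_ex (V : finType) (e : rel V) :
  exists k, packing_colorableb e k.
Proof.
exists #|V|; rewrite /packing_colorableb.
case: excluded_middle_informative => // H; exfalso; apply: H; exact: packing_colorable_card.
Qed.

Definition packing_chromatic_number (V : finType) (e : rel V) : nat :=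
  ex_minn (packing_colorableb_ex e).

Definition is_clique (V : finType) (e : rel V) (K : {set V}) : bool :=
  [forall x in K, forall y in K, (x != y) ==> e x y].

Definition clique_number (V : finType) (e : rel V) : nat :=
  \max_(K : {set V} | is_clique e K) #|K|.

Definition is_edge (V : finType) (e : rel V) (A : {set V}) : bool :=
  [exists u, exists v, e u v && (A == [set u; v])].

Definition edge_type (V : finType) (e : rel V) : finType :=
  {A : {set V} | is_edge e A}.

(** FSSD_m(G): vertices are the original vertices plus, for each edge uv
    and each j < m, a new vertex (uv, j) adjacent exactly to u and v. *)
Definition fssd_vertex (V : finType) (e : rel V) (m : nat) : finType :=
  (V + (edge_type e * 'I_m))%type.

Definition fssd_rel (V : finType) (e : rel V) (m : nat) : rel (fssd_vertex e m) :=
  fun x y =>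
    match x, y with
    | inl u, inr (A, _) => u \in val A
    | inr (A, _), inl u => u \in val A
    | _, _ => false
    end.
Arguments fssd_rel {V} e m.

(* Upper bound: shift an optimal packing colouring of G up by one on the original
   vertices and give every subdivision vertex colour 1; subdivision vertices are
   pairwise non-adjacent, and a walk between original vertices of FSSD_m(G) is twice
   as long as the walk of G it projects to.
   Lower bound: a path u v w of G gives a path on four vertices u, (uv), v, (vw),
   which needs three colours.  For a clique K of size at least 3, the vertices of K
   and one subdivision vertex per edge of K are pairwise within distance 4, and one
   finds |K| + 1 of them with distinct colours: if no vertex of K has colour 1, take
   K and one subdivision vertex; if u0 in K has colour 1, take u0, the subdivision
   vertices of the edges at u0 (pairwise at distance 2, none of colour 1) and one
   more vertex. *)

From Stdlib Require Import ClassicalEpsilon.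
From mathcomp Require Import all_boot zify.
Set Implicit Arguments. Unset Strict Implicit. Unset Printing Implicit Defensive.

Section PackingColoring.
Variables (T : finType) (r : rel T).

Lemma within_edge x y : r x y -> within r 1 x y.
Proof. by move=> rxy; exists [:: y]; rewrite /= rxy. Qed.

Lemma within_widen i j x y : i <= j -> within r i x y -> within r j x y.
Proof. by move=> ij [p [rp lp sp]]; exists p; split=> //; apply: leq_trans ij. Qed.

Lemma within_cat i j x y z :
  within r i x y -> within r j y z -> within r (i + j) x z.
Proof.
move=> [p [rp <- sp]] [q [rq <- sq]]; exists (p ++ q).
by rewrite cat_path last_cat rp rq size_cat leq_add.
Qed.

Lemma within_1 x y : within r 1 x y -> x = y \/ r x y.
Proof. by case=> -[|z [|? ?]] [//= rz <-]; [left | right; rewrite andbT in rz]. Qed.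

Lemma packing_coloring_gt0 k c x : packing_coloring r k c -> 0 < c x.
Proof. by case=> /(_ x) /andP []. Qed.

Lemma packing_coloring_neq k c d x y : packing_coloring r k c ->
  x != y -> within r d x y -> d <= c x -> c x != c y.
Proof.
move=> [_ Pc] xy [p [rp lp sp]] dc; apply/eqP => cxy.
by apply: (Pc x y xy cxy); exists p; split=> //; apply: leq_trans dc.
Qed.

Lemma packing_coloring_rainbow k c (s : seq T) :
  packing_coloring r k c -> uniq (map c s) -> size s <= k.
Proof.
move=> [Pk _] Us; rewrite -(size_map c) -(size_iota 1 k).
apply: uniq_leq_size => // _ /mapP [x _ ->]; rewrite mem_iota; have := Pk x; lia.
Qed.

Lemma packing_coloring_path4_gt2 k c w x y z : irreflexive r ->
  r w x -> r x y -> r y z -> w != y -> x != z -> packing_coloring r k c -> 2 < k.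
Proof.
move=> rI rwx rxy ryz wy xz Pc.
have neq u v d : u != v -> within r d u v -> d <= c u -> c u != c v.
  exact: packing_coloring_neq Pc.
have adj u v : r u v -> c u != c v.
  move=> ruv; apply: neq (within_edge ruv) (packing_coloring_gt0 _ Pc).
  by apply: contraTneq ruv => ->; rewrite rI.
have dist2 u v v' : r u v -> r v v' -> u != v' -> 2 <= c u -> c u != c v'.
  by move=> ruv rvv' uv'; apply: neq uv' (within_cat (within_edge ruv) (within_edge rvv')).
(* With colours in {1, 2} they would alternate along w x y z, but w, y and x, z
   are at distance 2, where only colour 1 may repeat. *)
have := dist2 _ _ _ rwx rxy wy; have := dist2 _ _ _ rxy ryz xz.
have := adj _ _ rwx; have := adj _ _ rxy; have := adj _ _ ryz.
have [Pk _] := Pc; have := Pk w; have := Pk x; have := Pk y; have := Pk z.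
lia.
Qed.

Lemma packing_colorableP k :
  reflect (packing_colorable r k) (packing_colorableb r k).
Proof. by rewrite /packing_colorableb; case: excluded_middle_informative; constructor. Qed.

Lemma packing_chromatic_number_colorable :
  packing_colorable r (packing_chromatic_number r).
Proof. by rewrite /packing_chromatic_number; case: ex_minnP => k /packing_colorableP. Qed.

Lemma packing_chromatic_number_min k :
  packing_colorable r k -> packing_chromatic_number r <= k.
Proof.
by move/packing_colorableP; rewrite /packing_chromatic_number; case: ex_minnP => n _; apply.
Qed.

Lemma clique_adj K x y : is_clique r K -> x \in K -> y \in K -> x != y -> r x y.
Proof. by move=> /forall_inP /(_ x) HK xK yK; move/forall_inP/(_ y yK)/implyP: (HK xK); apply. Qed.

Lemma clique_number_attained : exists2 K, is_clique r K & #|K| = clique_number r.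
Proof.
have [|K HK maxK] := @eq_bigmax_cond _ (is_clique r) (fun K : {set T} => #|K|).
  by apply/card_gt0P; exists set0; rewrite unfold_in; apply/forall_inP => x; rewrite inE.
by exists K => //; exact: esym maxK.
Qed.

Lemma connected_exit (A : {set T}) x y : symmetric r -> connected_graph r ->
  x \in A -> y \notin A -> exists u v, [/\ u \in A, v \notin A & r u v].
Proof.
move=> rS conn xA yA.
suff /existsP [u /existsP [v /and3P [uA vA ruv]]] :
  [exists u, exists v, [&& u \in A, v \notin A & r u v]] by exists u, v.
apply: contraNT yA => /existsPn noexit.
rewrite -(closed_connect _ (conn x y)) //; apply: intro_closed; first exact: sym_connect_sym.
move=> u v ruv uA; apply: contraT => vA.
by move/existsPn/(_ v): (noexit u); rewrite uA vA ruv.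
Qed.

Lemma connected_path3 : symmetric r -> connected_graph r -> 2 < #|T| ->
  exists x y z, [/\ r x y, r y z & x != z].
Proof.
move=> rS conn /card_gt2P [a [b [d [_ [ab bd da]]]]].
have [_ [y [/set1P -> ya ray]]] : exists u v, [/\ u \in [set a], v \notin [set a] & r u v].
  by apply: (@connected_exit _ a b rS conn (set11 a)); rewrite inE eq_sym.
rewrite inE in ya.
have tay : (if y == b then d else b) \notin [set a; y].
  rewrite !inE negb_or; case: (eqVneq y b) => [->|yb]; rewrite ?eqxx ?(negbTE yb) /=.
    by rewrite da eq_sym bd.
  by rewrite eq_sym ab eq_sym yb.
have [u [t [uay {}tay rut]]] := connected_exit rS conn (set21 a y) tay.
move: tay; rewrite !inE negb_or => /andP [ta ty].
case/set2P: uay => -> in rut.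
- by exists y, a, t; rewrite rS eq_sym.
- by exists a, y, t; rewrite eq_sym.
Qed.

End PackingColoring.

Section Fssd.
Variables (V : finType) (e : rel V) (m : nat).
Hypothesis eS : symmetric e.
Hypothesis m_gt0 : 0 < m.

Local Notation W := (fssd_vertex e m).
Local Notation F := (fssd_rel e m).

Lemma fssd_irr : irreflexive F.
Proof. by case=> [|[]]. Qed.

Lemma is_edge_pair u v : e u v -> is_edge e [set u; v].
Proof. by move=> euv; apply/existsP; exists u; apply/existsP; exists v; rewrite euv eqxx. Qed.

Lemma edge_mem_adj (A : edge_type e) u v : u \in val A -> v \in val A -> u = v \/ e u v.
Proof.
case: A => /= _ /existsP [a /existsP [b /andP [eab /eqP ->]]].
by move=> /set2P [] -> /set2P [] ->; [left | right | right; rewrite eS | left].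
Qed.

(* The subdivision vertex (uv, 0); for a non-edge uv the value [inl u] is junk. *)
Definition mid u v : W :=
  if insub [set u; v] is Some A then inr (A, Ordinal m_gt0) else inl u.

Lemma midE u v (euv : e u v) :
  mid u v = inr (exist _ [set u; v] (is_edge_pair euv), Ordinal m_gt0).
Proof.
rewrite /mid; case: insubP => [A _ EA|]; last by rewrite is_edge_pair.
by congr (inr (_, _)); apply: val_inj; rewrite /= EA.
Qed.

Lemma inl_neq_mid a u v : e u v -> (inl a : W) != mid u v.
Proof. by move=> euv; rewrite midE. Qed.

Lemma mid_neq u v a b t : e u v -> e a b ->
  t \in [set a; b] -> t \notin [set u; v] -> mid u v != mid a b.
Proof. by move=> euv eab tab; rewrite (midE euv) (midE eab); apply: contraNneq => -[->]. Qed.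

Lemma within_inl_mid u v a : e u v -> a \in [set u; v] -> within F 1 (inl a) (mid u v).
Proof. by move=> euv auv; apply: within_edge; rewrite midE. Qed.

Lemma within_mid_inl u v a : e u v -> a \in [set u; v] -> within F 1 (mid u v) (inl a).
Proof. by move=> euv auv; apply: within_edge; rewrite midE. Qed.

Lemma within_inl_inl a b : e a b -> within F 2 (inl a) (inl b).
Proof.
by move=> eab; apply: within_cat (within_inl_mid eab (set21 a b)) (within_mid_inl eab (set22 a b)).
Qed.

Lemma within_mid_mid u v a b t : e u v -> e a b ->
  t \in [set u; v] -> t \in [set a; b] -> within F 2 (mid u v) (mid a b).
Proof.
by move=> euv eab tuv tab; apply: within_cat (within_mid_inl euv tuv) (within_inl_mid eab tab).
Qed.

Lemma within3_inl_mid z t a b : e z t -> e a b -> t \in [set a; b] ->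
  within F 3 (inl z) (mid a b).
Proof.
by move=> ezt eab tab; apply: within_cat (within_inl_inl ezt) (within_inl_mid eab tab).
Qed.

Lemma within4_mid_mid u v a b t : e u v -> t \in [set u; v] -> e t a -> e a b ->
  within F 4 (mid u v) (mid a b).
Proof.
move=> euv tuv eta eab.
exact: within_cat (within_mid_inl euv tuv) (within3_inl_mid eta eab (set21 a b)).
Qed.

Lemma fssd_path_inl_within p u v : path F (inl u) p -> last (inl u) p = inl v ->
  within e (size p)./2 u v.
Proof.
move: {2}(size p) (leqnn (size p)) => n; elim: n p u => [|n IH] [|x p] u //=.
- by move=> _ _ [->]; exists [::].
- by move=> _ _ [->]; exists [::].
case: x => [//|[A j]]; case: p => [|[w|?] p] /=; [by [] | | by rewrite andbF].
move=> sp /and3P [uA wA wp] wv.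
have [q [wq qv sq]] := IH p w (ltnW sp) wp wv.
have [->|euw] := edge_mem_adj uA wA; first by exists q; split=> //; apply: leqW.
by exists (w :: q); rewrite /= euw wq.
Qed.

Lemma within_fssd_inl n u v : within F n (inl u) (inl v) -> within e n./2 u v.
Proof.
by move=> [p [Fp pv sp]]; apply: within_widen (fssd_path_inl_within Fp pv); apply: half_leq.
Qed.

Definition fssd_lift (cG : V -> nat) (x : W) : nat :=
  if x is inl v then (cG v).+1 else 1.

Lemma fssd_lift_packing k cG :
  packing_coloring e k cG -> packing_coloring F k.+1 (fssd_lift cG).
Proof.
move=> [Gk Gc]; split=> [[v|_] //=|]; first by rewrite ltnS; case/andP: (Gk v).
case=> [a|x] [b|y] //=.
- move=> ab [cab] /within_fssd_inl Fab; apply: (Gc a b ab cab).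
  by apply: within_widen Fab; have := Gk a; lia.
- by move=> _ [ca0]; have := Gk a; rewrite ca0.
- by move=> _ [cb0]; have := Gk b; rewrite -cb0.
- by move=> xy _ /within_1 [xy'|]; [rewrite xy' eqxx in xy | case: x y {xy} => [? ?] [? ?]].
Qed.

Lemma fssd_packing_gt2 k c u v w : irreflexive e ->
  e u v -> e v w -> u != w -> packing_coloring F k c -> 2 < k.
Proof.
move=> eI euv evw uw; have neq a b : e a b -> a != b.
  by move=> eab; apply: contraTneq eab => ->; rewrite eI.
move=> Pc; apply: (packing_coloring_path4_gt2 (w := inl u) (x := mid u v) (y := inl v)
  (z := mid v w) fssd_irr _ _ _ _ _ Pc).
- by rewrite (midE euv) /= set21.
- by rewrite (midE euv) /= set22.
- by rewrite (midE evw) /= set21.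
- exact: neq.
- by apply: (mid_neq (t := w)) => //; rewrite ?set22 // !inE negb_or eq_sym uw eq_sym neq.
Qed.

Section CliqueLowerBound.
Variables (k : nat) (c : W -> nat) (K : {set V}).
Hypotheses (Pc : packing_coloring F k c) (HK : is_clique e K).

Let c_gt0 x : 0 < c x := packing_coloring_gt0 x Pc.
Let col_neq d x y : x != y -> within F d x y -> d <= c x -> c x != c y :=
  packing_coloring_neq Pc.
Let adjK a b : a \in K -> b \in K -> a != b -> e a b := clique_adj HK.

Lemma clique_within3_inl_mid t a b : t \in K -> a \in K -> b \in K -> a != b ->
  within F 3 (inl t) (mid a b).
Proof.
move=> tK aK bK ab; have eab := adjK aK bK ab; have [<-|aNt] := eqVneq a t.
  exact: (within_widen _ (within_inl_mid eab (set21 a b))).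
by rewrite eq_sym in aNt; apply: within3_inl_mid (adjK tK aK aNt) eab (set21 a b).
Qed.

Lemma clique_within4_mid_mid a b u v : a \in K -> b \in K -> u \in K -> v \in K ->
  a != b -> u != v -> within F 4 (mid a b) (mid u v).
Proof.
move=> aK bK uK vK ab uv; have eab := adjK aK bK ab; have euv := adjK uK vK uv.
have [au|au] := eqVneq a u; last exact: within4_mid_mid eab (set21 a b) (adjK aK uK au) euv.
subst u; exact: (within_widen _ (within_mid_mid eab euv (set21 a b) (set21 a v))).
Qed.

Lemma card_clique_lt_without1 : 1 < #|K| -> (forall t, t \in K -> 1 < c (inl t)) -> #|K| < k.
Proof.
move=> K2 cK_gt1; have [a0 a0K] : exists a0, a0 \in K by apply/card_gt0P; lia.
(* With a of least colour on K, every other t in K has colour at least 3, so it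
   cannot share a colour with [mid a b], which is within distance 3 of it. *)
have [a aK amin] := @arg_minnP _ a0 [in K] (fun t => c (inl t)) a0K.
have [b /setD1P [ba bK]] : exists b, b \in K :\ a.
  by apply/card_gt0P; move: K2; rewrite (cardsD1 a K) aK; lia.
have ab : a != b by rewrite eq_sym.
have eab := adjK aK bK ab.
have cK_inj : {in K &, injective (fun t => c (inl t))}.
  move=> x y xK yK; apply: contra_eq => xy.
  exact: (col_neq (x := inl x) (y := inl y) xy (within_inl_inl (adjK xK yK xy)) (cK_gt1 x xK)).
have mid_new t : t \in K -> c (inl t) != c (mid a b).
  move=> tK; have [tab|tNab] := boolP (t \in [set a; b]).
    exact: col_neq (inl_neq_mid _ eab) (within_inl_mid eab tab) (c_gt0 _).
  have ta : t != a by apply: contraNneq tNab => ->; apply: set21.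
  have cat : c (inl a) < c (inl t).
    by rewrite ltn_neqAle amin // andbT; apply: contra ta => /eqP /(cK_inj _ _ aK tK) ->.
  apply: col_neq (inl_neq_mid _ eab) (clique_within3_inl_mid tK aK bK ab) _.
  exact: leq_ltn_trans (cK_gt1 a aK) cat.
have := packing_coloring_rainbow (s := mid a b :: map inl (enum K)) Pc.
rewrite /= size_map -cardE; apply; rewrite -map_comp map_inj_in_uniq ?enum_uniq ?andbT.
  by apply/mapP => -[t]; rewrite mem_enum => /mid_new /eqP /[swap] ->.
by move=> x y; rewrite !mem_enum; apply: cK_inj.
Qed.

Section StarAtColourOne.
Variable u0 : V.
Hypotheses (u0K : u0 \in K) (cu0 : c (inl u0) = 1).

Let adj0 v : v \in K :\ u0 -> e u0 v.
Proof. by case/setD1P => vu0 vK; apply: adjK; rewrite // eq_sym. Qed.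

Lemma star_colour_gt1 v : v \in K :\ u0 -> 1 < c (mid u0 v).
Proof.
move=> vKu; have eu0v := adj0 vKu.
have := col_neq (inl_neq_mid u0 eu0v) (within_inl_mid eu0v (set21 u0 v)) (c_gt0 _).
by rewrite cu0 ltn_neqAle => ->; apply: c_gt0.
Qed.

(* A vertex of K of colour at least 3 will do. Otherwise no subdivision vertex
   over K has colour 1; if K = {u0, a, b} take [mid a b], and if K has a triangle
   avoiding u0, one of its three subdivision vertices has colour at least 4, while
   any two subdivision vertices over K are within distance 4. *)
Lemma star_extra_colour : 2 < #|K| ->
  exists2 z, c z != 1 & forall v, v \in K :\ u0 -> c z != c (mid u0 v).
Proof.
move=> K3.
have [/exists_inP [w wK w3] | /exists_inPn cK2] := boolP [exists w in K, 2 < c (inl w)].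
  exists (inl w); first by apply: contraTneq w3 => ->.
  move=> v vKu; have /setD1P [vu0 vK] := vKu; rewrite eq_sym in vu0.
  exact: col_neq (inl_neq_mid w (adj0 vKu)) (clique_within3_inl_mid wK u0K vK vu0) w3.
have mid_gt1 a b : a \in K -> b \in K -> a != b -> 1 < c (mid a b).
  move=> aK bK ab; have eab := adjK aK bK ab.
  have := col_neq (inl_neq_mid a eab) (within_inl_mid eab (set21 a b)) (c_gt0 _).
  have := col_neq (inl_neq_mid b eab) (within_inl_mid eab (set22 a b)) (c_gt0 _).
  have := col_neq (x := inl a) (y := inl b) ab (within_inl_inl eab).
  have := cK2 a aK; have := cK2 b bK; rewrite -!leqNgt.
  by have := c_gt0 (inl a); have := c_gt0 (inl b); have := c_gt0 (mid a b); lia.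
have star_neq x y v : x \in K :\ u0 -> y \in K :\ u0 -> x != y -> v \in K :\ u0 ->
    (v \in [set x; y]) || (3 < c (mid x y)) -> c (mid x y) != c (mid u0 v).
  move=> xKu yKu xy vKu; have /setD1P [xu0 xK] := xKu; have /setD1P [yu0 yK] := yKu.
  have /setD1P [vu0 vK] := vKu; have exy := adjK xK yK xy; have eu0v := adj0 vKu.
  have u0Nxy : u0 \notin [set x; y] by rewrite !inE negb_or ![u0 == _]eq_sym xu0 yu0.
  have xy_u0v := mid_neq exy eu0v (set21 u0 v) u0Nxy.
  case/orP => [vxy | c4].
    exact: col_neq xy_u0v (within_mid_mid exy eu0v vxy (set22 u0 v)) (mid_gt1 x y xK yK xy).
  by rewrite eq_sym in vu0; apply: col_neq xy_u0v (clique_within4_mid_mid xK yK u0K vK xy vu0) c4.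
have /card_gt1P [a [b [aKu bKu ab]]] : 1 < #|K :\ u0|.
  by move: K3; rewrite (cardsD1 u0 K) u0K; lia.
have /setD1P [_ aK] := aKu; have /setD1P [_ bK] := bKu.
have [/subsetP sub | /subsetPn [d dKu]] := boolP (K :\ u0 \subset [set a; b]).
  exists (mid a b); first by rewrite neq_ltn mid_gt1 ?orbT.
  by move=> v vKu; apply: star_neq; rewrite ?sub.
rewrite !inE negb_or => /andP [da db]; have /setD1P [_ dK] := dKu.
have tri x y z : x \in K -> y \in K -> z \in K -> x != y -> y != z -> z != x ->
    c (mid x y) != c (mid y z).
  move=> xK yK zK xy yz zx; have exy := adjK xK yK xy; have eyz := adjK yK zK yz.
  have zNxy : z \notin [set x; y] by rewrite !inE negb_or zx eq_sym yz.
  exact: col_neq (mid_neq exy eyz (set22 y z) zNxy)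
    (within_mid_mid exy eyz (set22 x y) (set21 y z)) (mid_gt1 x y xK yK xy).
have bd : b != d by rewrite eq_sym.
have : [|| 3 < c (mid a b), 3 < c (mid b d) | 3 < c (mid d a)].
  move: (tri a b d aK bK dK ab bd da) (tri b d a bK dK aK bd da ab) (tri d a b dK aK bK da ab bd).
  move: (mid_gt1 a b aK bK ab) (mid_gt1 b d bK dK bd) (mid_gt1 d a dK aK da).
  by move: (c (mid a b)) (c (mid b d)) (c (mid d a)) => [|[|[|[|?]]]] [|[|[|[|?]]]] [|[|[|[|?]]]].
case/or3P => c4; [exists (mid a b) | exists (mid b d) | exists (mid d a)];
  by [rewrite neq_ltn (ltn_trans _ c4) ?orbT | move=> v vKu; apply: star_neq; rewrite ?c4 ?orbT].
Qed.

Lemma card_clique_lt_with1 : 2 < #|K| -> #|K| < k.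
Proof.
move=> K3; have [z z1 z_new] := star_extra_colour K3.
have star_inj : {in K :\ u0 &, injective (fun v => c (mid u0 v))}.
  move=> v w vKu wKu; apply: contra_eq => vw; have /setD1P [wu0 _] := wKu.
  have wNu0v : w \notin [set u0; v] by rewrite !inE negb_or wu0 eq_sym.
  exact: col_neq (mid_neq (adj0 vKu) (adj0 wKu) (set22 u0 w) wNu0v)
    (within_mid_mid (adj0 vKu) (adj0 wKu) (set21 u0 v) (set21 u0 w)) (star_colour_gt1 vKu).
have := packing_coloring_rainbow (s := inl u0 :: z :: map (mid u0) (enum (K :\ u0))) Pc.
rewrite /= size_map -cardE (cardsD1 u0 K) u0K add1n; apply.
rewrite !inE negb_or cu0 eq_sym z1 -map_comp map_inj_in_uniq ?enum_uniq ?andbT /=; last first.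
  by move=> v w; rewrite !mem_enum; apply: star_inj.
apply/andP; split; apply/mapP => -[v]; rewrite mem_enum => vKu /eqP; apply/negP.
  by rewrite neq_ltn star_colour_gt1.
exact: z_new.
Qed.

End StarAtColourOne.

Lemma card_clique_lt : 2 < #|K| -> #|K| < k.
Proof.
move=> K3.
have [/exists_inP [u uK /eqP cu] | /exists_inPn cK1] := boolP [exists u in K, c (inl u) == 1].
  exact: card_clique_lt_with1 uK cu K3.
apply: card_clique_lt_without1 => [|t tK]; first lia.
by rewrite ltn_neqAle eq_sym cK1 // c_gt0.
Qed.

End CliqueLowerBound.

End Fssd.

Theorem proposition3 (V : finType) (e : rel V) (m : nat) :
  simple_graph e -> connected_graph e -> 3 <= #|V| -> 1 <= m ->
  clique_number e + 1 <= packing_chromatic_number (fssd_rel e m) <=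
  packing_chromatic_number e + 1.
Proof.
move=> [eS eI] conn V3 m_gt0; rewrite !addn1; apply/andP; split.
- have [c Pc] := packing_chromatic_number_colorable (fssd_rel e m).
  have [K HK <-] := clique_number_attained e.
  have [K3 | K2] := leqP 3 #|K|; first exact: (card_clique_lt m_gt0 Pc HK K3).
  have [u [v [w [euv evw uw]]]] := connected_path3 eS conn V3.
  by have := fssd_packing_gt2 m_gt0 eI euv evw uw Pc; lia.
- apply: packing_chromatic_number_min.
  have [cG PG] := packing_chromatic_number_colorable e.
  by exists (fssd_lift cG); apply: fssd_lift_packing.
Qed.
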